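(* In a finite dynamic game as described in the context, let $K=(K^i)_{i\in\mathcal{I}}$ be compressed information. Suppose that for every player $i$ and every profile $\rho^{-i}$ of $K^j$-based strategies of players $j\neq i$ there exist functions $\Phi_t^{i,\rho^{-i}}:\mathcal{K}_t^i\to\Delta(\mathcal{X}_t\times\mathcal{K}_t^{-i})$, $t\in\mathcal{T}$, such that $$\Pr^{g^i,\rho^{-i}}(x_t,k_t^{-i}\mid h_t^i)=\Phi_t^{i,\rho^{-i}}(x_t,k_t^{-i}\mid k_t^i)$$ for all behavioral strategies $g^i$ of player $i$, all $t\in\mathcal{T}$, and all $h_t^i$ admissible under $(g^i,\rho^{-i})$. Then $K$ is mutually sufficient information.
   Context: Game model: finite set of players $\mathcal{I}$, times $\mathcal{T}=\{1,\dots,T\}$. At time $t$ each player $i$ takes action $U_t^i\in\mathcal{U}_t^i$, obtains reward $R_t^i\in[-1,1]$ and learns new information $Z_t^i\in\mathcal{Z}_t^i$. There is a state $X_t\in\mathcal{X}_t$ with $(X_{t+1},Z_t,R_t)=f_t(X_t,U_t,W_t)$ for fixed functions $f_t$. Primitive random variables $(X_1,H_1)$ and $W_1,\dots,W_T$ are mutually independent with commonly known distributions. All sets are finite. Perfect recall: $H_t^i=(H_1^i,Z_{1:t-1}^i)\in\mathcal{H}_t^i$, and $U_t^i$ is a component of $Z_t^i$. Behavioral strategy $g_t^i:\mathcal{H}_t^i\to\Delta(\mathcal{U}_t^i)$. A realization is admissible under a partial profile if it has positive probability under some completion of it. Compression: $K_1^i=\iota_1^i(H_1^i)$, $K_t^i=\iota_t^i(K_{t-1}^i,Z_{t-1}^i)$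 for fixed maps, finite value sets $\mathcal{K}_t^i$; $k_t^i$ is the compression of $h_t^i$; $K_t^{-i}=(K_t^j)_{j\ne i}$; a $K^i$-based strategy has $\rho_t^i:\mathcal{K}_t^i\to\Delta(\mathcal{U}_t^i)$. Information state: given $g^{-i}$, $K^i$ is an information state under $g^{-i}$ if there exist $P_t^{i,g^{-i}}:\mathcal{K}_t^i\times\mathcal{U}_t^i\to\Delta(\mathcal{K}_{t+1}^i)$, $r_t^{i,g^{-i}}:\mathcal{K}_t^i\times\mathcal{U}_t^i\to[-1,1]$ (independent of $g^i$) with $\Pr^{g^i,g^{-i}}(k_{t+1}^i\mid h_t^i,u_t^i)=P_t^{i,g^{-i}}(k_{t+1}^i\mid k_t^i,u_t^i)$ ($t<T$) and $\mathbb{E}^{g^i,g^{-i}}[R_t^i\mid h_t^i,u_t^i]=r_t^{i,g^{-i}}(k_t^i,u_t^i)$ for all $g^i$ and all $(h_t^i,u_t^i)$ admissible under $(g^i,g^{-i})$. $K$ is mutually sufficient information if for every $i$ and every profile $\rho^{-i}$ of $K^j$-based strategies ($j\ne i$), $K^i$ is an information state under $\rho^{-i}$. *)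

From HB Require Import structures.
From mathcomp Require Import all_boot all_order all_algebra.
Set Implicit Arguments. Unset Strict Implicit. Unset Printing Implicit Defensive.
Import Order.TTheory GRing.Theory Num.Theory.
Local Open Scope ring_scope.

Definition isDist (R : numDomainType) (T : finType) (p : T -> R) : Prop :=
  (forall x, 0 <= p x) /\ \sum_(x : T) p x = 1.

(* Times are 0-based: t = 0, ..., TT-1 correspond to 1, ..., T of the paper. *)
Record game (R : realFieldType) := Game {
  Pl : finType;
  TT : nat;
  Xs : nat -> finType;
  Us : nat -> Pl -> finType;
  Zs : nat -> Pl -> finType;
  Ws : nat -> finType;
  H1s : Pl -> finType;
  fX : forall t, Xs t -> {dffun forall i, Us t i} -> Ws t -> Xs t.+1;
  fZ : forall t, Xs t -> {dffun forall i, Us t i} -> Ws t -> forall i, Zs t i;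
  fR : forall t, Xs t -> {dffun forall i, Us t i} -> Ws t -> Pl -> R;
  P1 : Xs 0 -> {dffun forall i, H1s i} -> R;
  PW : forall t, Ws t -> R;
  actZ : forall t i, Zs t i -> Us t i;       (* U_t^i is a component of Z_t^i *)
  P1_dist : isDist (fun p : (Xs 0 * {dffun forall i, H1s i})%type => P1 p.1 p.2);
  PW_dist : forall t, isDist (@PW t);
  fR_bound : forall t x u w i, -1 <= @fR t x u w i <= 1;
  actZ_spec : forall t x u w i, @actZ t i (@fZ t x u w i) = u i
}.

Section Game.
Variables (R : realFieldType) (G : game R).

Local Notation I := (Pl G).
Local Notation X := (@Xs R G).
Local Notation U := (@Us R G).
Local Notation Z := (@Zs R G).
Local Notation W := (@Ws R G).

(* Perfect recall: H_t^i = (H_1^i, Z_1^i, ..., Z_{t-1}^i). *)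
Fixpoint hist (i : I) (t : nat) : finType :=
  match t with
  | 0 => @H1s R G i
  | s.+1 => (hist i s * Z s i)%type
  end.

Definition actions t := {dffun forall i : I, U t i}.
Definition jhist t := {dffun forall i : I, hist i t}.
Definition world t := (X t * jhist t)%type.

Definition strat (i : I) := forall t, hist i t -> U t i -> R.
Definition valid_strat (i : I) (g : strat i) :=
  forall t h, isDist (g t h).
Definition profile := forall i : I, strat i.

Definition next t (y : world t) (a : actions t) (w : W t) : world t.+1 :=
  (fX y.1 a w, @finfun I (fun i => hist i t.+1) (fun i => (y.2 i, fZ y.1 a w i))).

Definition aprob (g : profile) t (y : world t) (a : actions t) : R :=
  \prod_(j : I) g j t (y.2 j) (a j).

Fixpoint mu (g : profile) (t : nat) : world t -> R :=
  match t as t0 return world t0 -> R with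
  | 0 => fun y => P1 y.1 y.2
  | s.+1 => fun y =>
      \sum_(y0 : world s) \sum_(a : actions s) \sum_(w : W s)
        mu g y0 * aprob g y0 a * PW w * (y == next y0 a w)%:R
  end.

Definition wgt (g : profile) t (y : world t) (a : actions t) (w : W t) : R :=
  mu g y * aprob g y a * PW w.

Definition pprofile (i : I) := forall j : I, j != i -> strat j.

Definition mix (i : I) (g : strat i) (gm : pprofile i) : profile :=
  fun j => match @eqP I j i with
           | ReflectT e => eq_rect i strat g j (esym e)
           | ReflectF ne => gm j (introN eqP ne)
           end.

Definition valid_pprofile (i : I) (gm : pprofile i) :=
  forall j (nj : j != i), valid_strat (gm j nj).

Record compression := Compression {
  Ks : nat -> I -> finType;
  iota1 : forall i, @H1s R G i -> Ks 0 i;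
  iota : forall t i, Ks t i -> Z t i -> Ks t.+1 i
}.

Variable C : compression.
Local Notation K := (Ks C).

Fixpoint comp (i : I) (t : nat) : hist i t -> K t i :=
  match t as t0 return hist i t0 -> K t0 i with
  | 0 => fun h => @iota1 C i h
  | s.+1 => fun h => @iota C s i (comp h.1) h.2
  end.

Definition kmi (i : I) t := {dffun forall j : {j : I | j != i}, K t (val j)}.
Definition kmi_of (i : I) t (y : world t) : kmi i t :=
  @finfun _ (fun j : {j : I | j != i} => K t (val j))
    (fun j => comp (y.2 (val j))).

Definition kstrat (i : I) := forall t, K t i -> U t i -> R.
Definition valid_kstrat (i : I) (rho : kstrat i) := forall t k, isDist (rho t k).
Definition kstrat_strat (i : I) (rho : kstrat i) : strat i :=
  fun t h u => rho t (comp h) u.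
Definition kpprofile (i : I) := forall j : I, j != i -> kstrat j.
Definition valid_kpprofile (i : I) (rho : kpprofile i) :=
  forall j (nj : j != i), valid_kstrat (rho j nj).
Definition kpp_pp (i : I) (rho : kpprofile i) : pprofile i :=
  fun j nj => kstrat_strat (rho j nj).

Definition PrH (g : profile) (i : I) t (h : hist i t) : R :=
  \sum_(y : world t) (y.2 i == h)%:R * mu g y.
Definition PrHXK (g : profile) (i : I) t (h : hist i t) (x : X t) (km : kmi i t) : R :=
  \sum_(y : world t)
     (y.2 i == h)%:R * (y.1 == x)%:R * (kmi_of i y == km)%:R * mu g y.
Definition PrHU (g : profile) (i : I) t (h : hist i t) (u : U t i) : R :=
  \sum_(y : world t) \sum_(a : actions t) \sum_(w : W t)
     (y.2 i == h)%:R * (a i == u)%:R * wgt g y a w.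
Definition PrHUK (g : profile) (i : I) t (h : hist i t) (u : U t i) (k : K t.+1 i) : R :=
  \sum_(y : world t) \sum_(a : actions t) \sum_(w : W t)
     (y.2 i == h)%:R * (a i == u)%:R *
     (comp ((next y a w).2 i) == k)%:R * wgt g y a w.
Definition ERHU (g : profile) (i : I) t (h : hist i t) (u : U t i) : R :=
  \sum_(y : world t) \sum_(a : actions t) \sum_(w : W t)
     (y.2 i == h)%:R * (a i == u)%:R * fR y.1 a w i * wgt g y a w.

Definition condK g i t (h : hist i t) (u : U t i) (k : K t.+1 i) :=
  PrHUK g h u k / PrHU g h u.
Definition condR g i t (h : hist i t) (u : U t i) := ERHU g h u / PrHU g h u.
Definition condXK g i t (h : hist i t) (x : X t) (km : kmi i t) :=
  PrHXK g h x km / PrH g h.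

Definition info_state (i : I) (gm : pprofile i) : Prop :=
  exists (P : forall t, K t i -> U t i -> K t.+1 i -> R)
         (r : forall t, K t i -> U t i -> R),
    (forall t k u, (t.+1 < TT G)%N -> isDist (P t k u)) /\
    (forall t k u, (t < TT G)%N -> -1 <= r t k u <= 1) /\
    forall g : strat i, valid_strat g ->
      forall t (h : hist i t) (u : U t i),
        (t < TT G)%N -> 0 < PrHU (mix g gm) h u ->
        ((t.+1 < TT G)%N ->
           forall k, condK (mix g gm) h u k = P t (comp h) u k) /\
        condR (mix g gm) h u = r t (comp h) u.

Definition mutually_sufficient : Prop :=
  forall (i : I) (rho : kpprofile i), valid_kpprofile rho ->
    info_state (kpp_pp rho).

Definition belief_condition : Prop :=
  forall (i : I) (rho : kpprofile i), valid_kpprofile rho ->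
    exists Phi : forall t, K t i -> (X t * kmi i t)%type -> R,
      (forall t k, (t < TT G)%N -> isDist (Phi t k)) /\
      forall g : strat i, valid_strat g ->
        forall t (h : hist i t), (t < TT G)%N ->
          0 < PrH (mix g (kpp_pp rho)) h ->
          forall (x : X t) (km : kmi i t),
            condXK (mix g (kpp_pp rho)) h x km = Phi t (comp h) (x, km).

End Game.

From Pilot Require Import Defs.
From mathcomp Require Import all_boot all_order all_algebra ring.
Set Implicit Arguments. Unset Strict Implicit. Unset Printing Implicit Defensive.
Import Order.TTheory GRing.Theory Num.Theory.
Local Open Scope ring_scope.

(* When the opponents use K-based strategies, the weight of (X_t, H_t, U_t, W_t) factors as
   Pr(x_t, h_t) * g_t^i(u_t^i | h_t^i) * Q(u_t^{-i} | k_t^{-i}) * Pr(w_t), where Q is the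
   product of the opponents' strategies at their compressions.  Conditioning on
   (h_t^i, u_t^i) cancels g_t^i: the conditional expectation of a function of
   (x_t, k_t^{-i}, u_t, w_t) is its average under Q and Pr(w_t), further averaged against the
   belief Pr(x_t, k_t^{-i} | h_t^i) = Phi(. | k_t^i).  Given k_t^i, the next compression
   k_{t+1}^i = iota(k_t^i, z_t^i) and the reward R_t^i are such functions, so the transition
   kernel and expected reward of K^i depend on (k_t^i, u_t^i) alone. *)

Lemma big_sig (R : Type) (idx : R) (op : Monoid.com_law idx) (T : finType)
    (P : pred T) (F : T -> R) :
  \big[op/idx]_(j | P j) F j = \big[op/idx]_(s : {j : T | P j}) F (val s).
Proof.
rewrite (reindex_omap (val : {j : T | P j} -> T) insub); last first.
  by move=> j Pj; rewrite insubT.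
by apply: eq_bigl => s; rewrite (valP s) valK eqxx.
Qed.

Lemma untag_Tagged (I : eqType) (T_ : I -> Type) (R : Type) (idx : R) (j : I)
    (F : T_ j -> R) (x : T_ j) :
  untag idx F (Tagged T_ x) = F x.
Proof. by rewrite (@untagE _ _ _ _ _ _ (Tagged T_ x) (erefl j)). Qed.

Section SumDffun.
Variables (R : comPzSemiRingType) (I : finType) (T_ : I -> finType).

Lemma sum_dffun_prod (F : forall i, T_ i -> R) :
  \sum_(a : {dffun forall i, T_ i}) \prod_i F i (a i) =
  \prod_i \sum_(x : T_ i) F i x.
Proof.
pose P_ i := [ffun x : T_ i => F i x].
transitivity (\sum_(a : {dffun forall i, T_ i}) \prod_i P_ i (a i)).
  by apply: eq_bigr => a _; apply: eq_bigr => i _; rewrite ffunE.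
transitivity (\prod_i \sum_(x : T_ i) P_ i x); last first.
  by apply: eq_bigr => i _; apply: eq_bigr => x _; rewrite ffunE.
rewrite (reindex (@dffun_of_fprod I T_)); last first.
  exact/onW_bij/dffun_of_fprod_bij.
transitivity (\sum_(t : fprod T_) \prod_(i in I) P_ i (t i)).
  by apply: eq_bigr => t _; apply: eq_big => // i _; rewrite /dffun_of_fprod ffunE.
rewrite big_fprod; under [RHS]eq_bigr do rewrite (big_tag (fun i x => P_ i x)).
by rewrite bigA_distr_big_dep.
Qed.

Lemma sum_dffun_pinned (i : I) (u : T_ i)
    (F : forall s : {j : I | j != i}, T_ (val s) -> R) :
  \sum_(a : {dffun forall j, T_ j})
      (a i == u)%:R * \prod_(s : {j : I | j != i}) F s (a (val s)) =
  \prod_(s : {j : I | j != i}) \sum_(x : T_ (val s)) F s x.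
Proof.
(* Tagging lets the pinned factor at i and the factors at j != i, which live in
   different types, form a single family indexed by I. *)
pose F' j (x : T_ j) : R :=
  if insub j is Some s then untag 0 (F s) (Tagged T_ x)
  else (Tagged T_ x == Tagged T_ u)%:R.
have F'_other (s : {j : I | j != i}) x : F' (val s) x = F s x.
  by rewrite /F' valK untag_Tagged.
have F'_pinned x : F' i x = (x == u)%:R by rewrite /F' insubN ?eqxx ?eq_Tagged.
transitivity (\sum_(a : {dffun forall j, T_ j}) \prod_j F' j (a j)).
  apply: eq_bigr => a _; rewrite (bigD1 i) //= F'_pinned (big_sig _ (fun j => j != i)).
  by congr (_ * _); apply: eq_bigr => s _; rewrite F'_other.
rewrite sum_dffun_prod (bigD1 i) //= (big_sig _ (fun j => j != i)).
under eq_bigr do rewrite F'_pinned.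
rewrite (bigD1 u) //= eqxx big1 ?addr0 ?mul1r => [|x /negbTE -> //].
by apply: eq_bigr => s _; under eq_bigr do rewrite F'_other.
Qed.

End SumDffun.

Section Distributions.
Variables (R : numDomainType).

Lemma isDist_dirac (T : finType) (z : T) : isDist (fun x : T => (z == x)%:R : R).
Proof.
split=> [x|]; first exact: ler0n.
by rewrite (bigD1 z) //= eqxx big1 ?addr0 // => x; rewrite eq_sym => /negbTE ->.
Qed.

Lemma isDist_mix (S T : finType) (w : S -> R) (q : S -> T -> R) :
  isDist w -> (forall s, isDist (q s)) -> isDist (fun x => \sum_s w s * q s x).
Proof.
move=> [w_ge0 w_sum1] q_dist; split=> [x|].
  by apply: sumr_ge0 => s _; rewrite mulr_ge0 ?w_ge0 ?(q_dist s).1.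
rewrite exchange_big /= -w_sum1; apply: eq_bigr => s _.
by rewrite -mulr_sumr (q_dist s).2 mulr1.
Qed.

Lemma isDist_avg_norm_le1 (T : finType) (w f : T -> R) :
  isDist w -> (forall x, `|f x| <= 1) -> `|\sum_x w x * f x| <= 1.
Proof.
move=> [w_ge0 w_sum1] f_le1; rewrite -w_sum1.
apply: le_trans (ler_norm_sum _ _ _) _; apply: ler_sum => x _.
by rewrite normrM ger0_norm // ler_piMr.
Qed.

End Distributions.

Section Mix.
Variables (R : realFieldType) (G : game R) (i : Pl G).

Lemma mix_self (g : strat i) (gm : pprofile i) : @mix _ _ i g gm i = g.
Proof.
rewrite /mix; generalize (@eqP _ i i) at 1 => r.
refine (match r as r0 in reflect _ b return
  (match r0 with ReflectT e => eq_rect i (@strat R G) g i (esym e)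
   | ReflectF ne => gm i (introN eqP ne) end) = g with
  ReflectT e => _ | ReflectF ne => _ end); last by case: ne.
by rewrite eq_axiomK.
Qed.

Lemma mix_other (g : strat i) (gm : pprofile i) j (nj : j != i) :
  @mix _ _ i g gm j = gm j nj.
Proof.
rewrite /mix; generalize (@eqP _ j i) at 1 => r.
refine (match r as r0 in reflect _ b return
  (match r0 with ReflectT e => eq_rect i (@strat R G) g j (esym e)
   | ReflectF ne => gm j (introN eqP ne) end) = gm j nj with
  ReflectT e => _ | ReflectF ne => _ end); first by case/eqP: nj.
by congr (gm j); apply: bool_irrelevance.
Qed.

End Mix.

Section Disintegration.
Variables (R : realFieldType) (G : game R) (C : compression G).

Lemma sum_world_disintegrate (g : profile G) i t (h : hist i t)
    (f : Xs G t -> kmi C i t -> R) :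
  \sum_(y : world G t) (y.2 i == h)%:R * mu g y * f y.1 (kmi_of C i y) =
  \sum_(p : Xs G t * kmi C i t) PrHXK (C:=C) g h p.1 p.2 * f p.1 p.2.
Proof.
under [RHS]eq_bigr do rewrite /PrHXK mulr_suml.
rewrite [RHS]exchange_big /=; apply: eq_bigr => y _.
rewrite (bigD1 (y.1, kmi_of C i y)) //= !eqxx big1 ?addr0 => [|[x km] /= ne].
  by rewrite !mulr1n !mulr1.
have [ex|_] := eqVneq y.1 x; last by rewrite mulr0n; ring.
have [ekm|_] := eqVneq (kmi_of C i y) km; last by rewrite mulr0n; ring.
by move: ne; rewrite ex ekm eqxx.
Qed.

(* Unnormalized E[f ; H_t^i = h, U_t^i = u]; PrHU, PrHUK and ERHU are instances. *)
Definition EHU (g : profile G) i t (h : hist i t) (u : Us t i)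
    (f : world G t -> actions G t -> Ws G t -> R) : R :=
  \sum_(y : world G t) \sum_(a : actions G t) \sum_(w : Ws G t)
     (y.2 i == h)%:R * (a i == u)%:R * f y a w * wgt g y a w.

Lemma PrHU_EHU (g : profile G) i t (h : hist i t) (u : Us t i) :
  PrHU g h u = EHU g h u (fun _ _ _ => 1).
Proof.
by apply: eq_bigr => y _; apply: eq_bigr => a _; under [RHS]eq_bigr do rewrite mulr1.
Qed.

End Disintegration.

Section KBasedOpponents.
Variables (R : realFieldType) (G : game R) (C : compression G).
Variables (i : Pl G) (rho : kpprofile C i).
Hypothesis rho_valid : valid_kpprofile rho.

Definition opp_prob t (km : kmi C i t) (a : actions G t) : R :=
  \prod_(s : {j : Pl G | j != i}) rho (valP s) (km s) (a (val s)).

Lemma aprob_mix (g : strat i) t (y : world G t) (a : actions G t) :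
  aprob (mix g (kpp_pp rho)) y a = g t (y.2 i) (a i) * opp_prob (kmi_of C i y) a.
Proof.
rewrite /aprob (bigD1 i) //= mix_self (big_sig _ (fun j => j != i)); congr (_ * _).
by apply: eq_bigr => s _; rewrite (mix_other _ _ (valP s)) /kpp_pp /kstrat_strat ffunE.
Qed.

Definition act_noise_dist t (km : kmi C i t) (u : Us t i)
    (aw : actions G t * Ws G t) : R :=
  (aw.1 i == u)%:R * opp_prob km aw.1 * PW aw.2.

Lemma isDist_act_noise_dist t (km : kmi C i t) (u : Us t i) : isDist (act_noise_dist km u).
Proof.
split=> [aw|].
  rewrite !mulr_ge0 ?ler0n ?(PW_dist G t).1 //.
  by apply: prodr_ge0 => s _; exact: (rho_valid (valP s) (km s)).1.
rewrite -(pair_bigA _ (fun a w => act_noise_dist km u (a, w))) /act_noise_dist /=.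
under eq_bigr do rewrite -mulr_sumr (PW_dist G t).2 mulr1.
rewrite (sum_dffun_pinned u (fun s => rho (valP s) (km s))).
by apply: big1 => s _; exact: (rho_valid (valP s) (km s)).2.
Qed.

Lemma EHU_mix (g : strat i) t (h : hist i t) (u : Us t i)
    (f : world G t -> actions G t -> Ws G t -> R)
    (F : Xs G t * kmi C i t -> actions G t * Ws G t -> R) :
  (forall (y : world G t) a w, y.2 i = h -> f y a w = F (y.1, kmi_of C i y) (a, w)) ->
  EHU (mix g (kpp_pp rho)) h u f =
  g t h u * \sum_(p : Xs G t * kmi C i t)
    PrHXK (C:=C) (mix g (kpp_pp rho)) h p.1 p.2 * \sum_aw act_noise_dist p.2 u aw * F p aw.
Proof.
move=> fF; set g' := mix g (kpp_pp rho).
transitivity (\sum_(y : world G t) (y.2 i == h)%:R * mu g' y *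
  (g t h u * \sum_aw act_noise_dist (kmi_of C i y) u aw * F (y.1, kmi_of C i y) aw)).
  apply: eq_bigr => y _; rewrite pair_bigA /=.
  have [yh|_] := eqVneq (y.2 i) h; last by rewrite !mul0r big1 // => aw _; rewrite !mul0r.
  rewrite !mul1r !mulr_sumr; apply: eq_bigr => -[a w] _.
  rewrite /wgt aprob_mix yh fF // /act_noise_dist /=.
  by have [->|_] := eqVneq (a i) u; rewrite ?eqxx ?mulr1n ?mulr0n; ring.
rewrite (sum_world_disintegrate _ _ (fun x km => g t h u *
  \sum_aw act_noise_dist km u aw * F (x, km) aw)) mulr_sumr.
by apply: eq_bigr => -[x km] _ /=; ring.
Qed.

Lemma PrHU_mix (g : strat i) t (h : hist i t) (u : Us t i) :
  PrHU (mix g (kpp_pp rho)) h u = g t h u * PrH (mix g (kpp_pp rho)) h.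
Proof.
rewrite PrHU_EHU (@EHU_mix g t h u _ (fun _ _ => 1)) //; congr (_ * _).
under eq_bigr do rewrite (eq_bigr _ (fun aw _ => mulr1 _)) (isDist_act_noise_dist _ _).2.
rewrite -(sum_world_disintegrate _ _ (fun _ _ => 1)).
by apply: eq_bigr => y _; rewrite mulr1.
Qed.

Section Beliefs.
Variable Phi : forall t, Ks C t i -> Xs G t * kmi C i t -> R.

Definition belief_avg t (k : Ks C t i) (u : Us t i)
    (F : Xs G t * kmi C i t -> actions G t * Ws G t -> R) : R :=
  \sum_p Phi k p * \sum_aw act_noise_dist p.2 u aw * F p aw.

Lemma cond_EHU_mix (g : strat i) t (h : hist i t) (u : Us t i)
    (f : world G t -> actions G t -> Ws G t -> R)
    (F : Xs G t * kmi C i t -> actions G t * Ws G t -> R) :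
  valid_strat g -> 0 < PrHU (mix g (kpp_pp rho)) h u ->
  (0 < PrH (mix g (kpp_pp rho)) h -> forall x km,
     condXK (mix g (kpp_pp rho)) h x km = Phi (Defs.comp C h) (x, km)) ->
  (forall (y : world G t) a w, y.2 i = h -> f y a w = F (y.1, kmi_of C i y) (a, w)) ->
  EHU (mix g (kpp_pp rho)) h u f / PrHU (mix g (kpp_pp rho)) h u =
  belief_avg (Defs.comp C h) u F.
Proof.
move=> g_valid; rewrite PrHU_mix => pos_hu belief fF.
have g_pos : 0 < g t h u.
  rewrite lt_def (g_valid t h).1 andbT; apply: contraTneq pos_hu => ->.
  by rewrite mul0r ltxx.
have pos_h : 0 < PrH (mix g (kpp_pp rho)) h by rewrite -(pmulr_rgt0 _ g_pos).
rewrite (EHU_mix g u fF) -mulf_div divff ?gt_eqF // mul1r mulr_suml.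
by apply: eq_bigr => -[x km] _; rewrite mulrAC -belief.
Qed.

End Beliefs.
End KBasedOpponents.

Theorem lemma1 (R : realFieldType) (G : game R) (C : compression G) :
  belief_condition C -> mutually_sufficient C.
Proof.
move=> belief i rho rho_valid.
have [Phi [Phi_dist Phi_cond]] := belief i rho rho_valid.
exists (fun t k u k' => belief_avg rho Phi k u
  (fun p aw => (Defs.iota k (fZ p.1 aw.1 aw.2 i) == k')%:R)).
exists (fun t k u => belief_avg rho Phi k u (fun p aw => fR p.1 aw.1 aw.2 i)).
split; [|split].
- move=> t k u /ltnW lt_t; apply: isDist_mix (Phi_dist t k lt_t) _ => p.
  apply: isDist_mix (isDist_act_noise_dist rho_valid _ _) _ => aw.
  exact: isDist_dirac.
- move=> t k u lt_t; rewrite -ler_norml.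
  apply: isDist_avg_norm_le1 (Phi_dist t k lt_t) _ => p.
  apply: isDist_avg_norm_le1 (isDist_act_noise_dist rho_valid _ _) _ => aw.
  by rewrite ler_norml fR_bound.
move=> g g_valid t h u lt_t pos_hu; split=> [_ k'|].
- apply: (cond_EHU_mix rho_valid g_valid pos_hu (Phi_cond g g_valid t h lt_t)).
  by move=> y a w yh; rewrite /next /= ffunE /= yh.
- exact: (cond_EHU_mix rho_valid g_valid pos_hu (Phi_cond g g_valid t h lt_t)).
Qed.
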